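(* For any integer $\ell$, let $\mathcal D=\times_{i=1}^\ell\mathcal D_i$ and $\hat{\mathcal D}=\times_{i=1}^\ell\hat{\mathcal D}_i$ where each $\mathcal D_i,\hat{\mathcal D}_i$ is a distribution on $\mathbb R$. If $\|\mathcal D_i-\hat{\mathcal D}_i\|_K\le\xi$ for all $i$, then $\left|\Pr_{\mathcal D}[\mathcal E]-\Pr_{\hat{\mathcal D}}[\mathcal E]\right|\le2\xi\ell$ for every single-intersecting event $\mathcal E\subseteq\mathbb R^\ell$.
   Context: The Kolmogorov distance is $\|P-Q\|_K=\sup_{x\in\mathbb R}|\Pr_{X\sim P}[X\le x]-\Pr_{X\sim Q}[X\le x]|$. An event $\mathcal E\subseteq\mathbb R^\ell$ is single-intersecting if for every $i\in[\ell]$ and every $a_{-i}\in\mathbb R^{\ell-1}$, the intersection of $\mathcal E$ with the line $\{x:x_{-i}=a_{-i}\}$ is of the form $\{x:x_{-i}=a_{-i},\ x_i\in[\underline a,\bar a]\}$ (an interval, possibly empty, endpoints allowed to be $\pm\infty$). *)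

From mathcomp Require Import all_boot all_order all_algebra.
From mathcomp Require Import all_classical all_reals all_analysis.
Import Order.TTheory GRing.Theory Num.Theory.
Local Open Scope classical_set_scope.
Local Open Scope ring_scope.
Local Open Scope ereal_scope.

Set Implicit Arguments.
Unset Strict Implicit.
Unset Printing Implicit Defensive.

Definition kolmogorov_dist (R : realType) (P Q : probability R R) : \bar R :=
  ereal_sup [set `|P `]-oo, x]%classic - Q `]-oo, x]%classic| | x in [set: R]].

(* P (a probability on R^l, realized as l.-tuple R with the product
   sigma-algebra generated by the coordinates) is the product distribution
   of the D i : it assigns to every measurable box prod_i A_i the product
   of the D i (A i).  (The product measure is unique, boxes form a
   pi-system generating the sigma-algebra.) *)
Definition is_product_prob (R : realType) (l : nat)
    (D : 'I_l -> probability R R) (P : probability (l.-tuple R) R) : Prop :=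
  forall A : 'I_l -> set R, (forall i, measurable (A i)) ->
    P [set x | forall i, A i (tnth x i)] = \prod_(i < l) D i (A i).

(* E is single-intersecting: for every coordinate i and every point a,
   the intersection of E with the line {x : x_{-i} = a_{-i}} is
   {x on that line : lo <= x_i <= hi} for some extended reals lo, hi
   (possibly empty: lo > hi; infinite endpoints allowed). *)
Definition single_intersecting (R : realType) (l : nat)
    (E : set (l.-tuple R)) : Prop :=
  forall (i : 'I_l) (a : l.-tuple R), exists lo hi : \bar R,
    forall x : l.-tuple R, (forall j, j != i -> tnth x j = tnth a j) ->
      (E x <-> lo <= (tnth x i)%:E <= hi).

From HB Require Import structures.
From mathcomp Require Import all_boot all_order all_algebra.
From mathcomp Require Import all_classical all_reals all_analysis.
From mathcomp Require Import lra measurable_realfun.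
Import Order.TTheory GRing.Theory Num.Theory.
Local Open Scope classical_set_scope.
Local Open Scope ring_scope.
Local Open Scope ereal_scope.

(* Hybrid argument.  Let H_k be the product law whose first k coordinates
   follow D and the others Dh; it is the image of P \x Ph under [tmix k],
   and product laws are determined by their values on boxes, so H_0 = Ph and
   H_l = P.  Moreover H_k.+1 and H_k are the images of H_k \x D_k and
   H_k \x Dh_k under [tupdate k], which overwrites coordinate k.  By Fubini,
   their values on E are averages of the D_k- and Dh_k-measures of the
   sections of E along coordinate k.  These sections are intervals because E
   is single-intersecting, and laws at Kolmogorov distance at most xi give
   measures within 2 xi to any interval: one comparison of distribution
   functions at each endpoint, the left one through a left limit.
   Telescoping over k gives the bound 2 xi l. *)

Section kolmogorov_dist.
Context {R : realType} {nu1 nu2 : probability R R}.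

Lemma le_kolmogorov_dist (x : R) :
  `|nu1 `]-oo, x]%classic - nu2 `]-oo, x]%classic| <= kolmogorov_dist nu1 nu2.
Proof. by apply: ereal_sup_ubound; exists x. Qed.

Lemma kolmogorov_dist_ge0 : 0 <= kolmogorov_dist nu1 nu2.
Proof. exact: le_trans (abse_ge0 _) (le_kolmogorov_dist 0%R). Qed.

Lemma kolmogorov_distC : kolmogorov_dist nu1 nu2 = kolmogorov_dist nu2 nu1.
Proof.
rewrite /kolmogorov_dist; congr ereal_sup; apply: eq_imagel => x _.
by rewrite -abseN fin_num_oppeB ?fin_num_measure// addeC.
Qed.

Lemma kolmogorov_dist_ub_ge0 {xi : R} :
  kolmogorov_dist nu1 nu2 <= xi%:E -> (0 <= xi)%R.
Proof. by rewrite -lee_fin; exact: le_trans kolmogorov_dist_ge0. Qed.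

End kolmogorov_dist.

Lemma itvNyo_bigcup (R : realType) (x : R) :
  `]-oo, x[%classic = \bigcup_n `]-oo, (x - n.+1%:R^-1)%R]%classic.
Proof.
apply/seteqP; split => [y|y [n _]]; rewrite /= !in_itv/=; last first.
  by move=> /le_lt_trans; apply; rewrite ltrBlDr ltrDl invr_gt0 ltr0n.
move=> yx; exists (Num.truncn (x - y)^-1) => //=.
rewrite in_itv/= lerBrDl addrC -lerBrDl -[leRHS]invrK.
by rewrite lef_pV2 ?posrE ?ltr0n// ?invr_gt0 ?subr_gt0// ltW// truncnS_gt.
Qed.

Section kolmogorov_rays.
Context {R : realType} {nu1 nu2 : probability R R} {xi : R}.
Hypothesis nu12 : kolmogorov_dist nu1 nu2 <= xi%:E.

Let xi_ge0 : (0 <= xi)%R := kolmogorov_dist_ub_ge0 nu12.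

Lemma kolmogorov_le_itvNyc (x : R) :
  nu1 `]-oo, x]%classic <= nu2 `]-oo, x]%classic + xi%:E.
Proof.
rewrite -leeBlDl ?fin_num_measure//.
exact: le_trans (lee_abs _) (le_trans (le_kolmogorov_dist x) nu12).
Qed.

Lemma kolmogorov_le_itvNyo (x : R) :
  nu1 `]-oo, x[%classic <= nu2 `]-oo, x[%classic + xi%:E.
Proof.
pose F n := `]-oo, (x - n.+1%:R^-1)%R]%classic.
have mF n : measurable (F n) by exact: measurable_itv.
have ndF : nondecreasing_seq F.
  move=> n m nm; apply/subsetPset => y; rewrite /F /= !in_itv/=.
  move=> /le_trans; apply.
  by rewrite lerD2l lerN2 lef_pV2 ?posrE ?ltr0n// ler_nat.
have := nondecreasing_cvg_mu (mu := nu1) mF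
  (bigcup_measurable (fun n _ => mF n)) ndF.
rewrite -itvNyo_bigcup => cvF; rewrite -(cvg_lim _ cvF)//.
apply: lime_le; first by apply/cvg_ex; exists (nu1 `]-oo, x[%classic).
apply: nearW => n /=; apply: le_trans (kolmogorov_le_itvNyc _) _.
apply/leeD2r/le_measure; rewrite ?inE; [exact: mF|exact: measurable_itv|].
by rewrite [X in _ `<=` X]itvNyo_bigcup => y; exists n.
Qed.

Lemma kolmogorov_le_itvNyc_ereal (e : \bar R) :
  nu1 [set u | u%:E <= e] <= nu2 [set u | u%:E <= e] + xi%:E.
Proof.
case: e => [r| |].
- suff -> : [set u | u%:E <= r%:E] = `]-oo, r]%classic.
    exact: kolmogorov_le_itvNyc.
  by apply/seteqP; split => u; rewrite /= in_itv/= lee_fin.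
- suff -> : [set u : R | u%:E <= +oo] = setT by rewrite !probability_setT leeDl.
  by apply/seteqP; split => u //= _; rewrite leey.
- suff -> : [set u : R | u%:E <= -oo] = set0 by rewrite !measure0 add0e lee_fin.
  by apply/seteqP; split => u //=; rewrite leeNy_eq.
Qed.

Lemma kolmogorov_le_itvNyo_ereal (e : \bar R) :
  nu1 [set u | u%:E < e] <= nu2 [set u | u%:E < e] + xi%:E.
Proof.
case: e => [r| |].
- suff -> : [set u | u%:E < r%:E] = `]-oo, r[%classic.
    exact: kolmogorov_le_itvNyo.
  by apply/seteqP; split => u; rewrite /= in_itv/= lte_fin.
- suff -> : [set u : R | u%:E < +oo] = setT by rewrite !probability_setT leeDl.
  by apply/seteqP; split => u //= _; rewrite ltry.
- suff -> : [set u : R | u%:E < -oo] = set0 by rewrite !measure0 add0e lee_fin.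
  by apply/seteqP; split => u //=; rewrite ltNge leNye.
Qed.

End kolmogorov_rays.

Lemma measurable_EFin_itv {R : realType} (i : interval (\bar R)) :
  measurable [set u : R | u%:E \in i].
Proof.
rewrite -[X in measurable X]setTI.
exact: EFin_measurable (emeasurable_itv i).
Qed.

Lemma kolmogorov_le_interval {R : realType} {nu1 nu2 : probability R R} {xi : R}
    (lo hi : \bar R) :
  kolmogorov_dist nu1 nu2 <= xi%:E ->
  nu1 [set u | lo <= u%:E <= hi] <=
    nu2 [set u | lo <= u%:E <= hi] + (2 * xi)%:E.
Proof.
move=> nu12; have xi_ge0 := kolmogorov_dist_ub_ge0 nu12.
have nu21 : kolmogorov_dist nu2 nu1 <= xi%:E by rewrite kolmogorov_distC.
set I := [set u | lo <= u%:E <= hi].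
have [hilo|lohi] := ltP hi lo.
  suff -> : I = set0 by rewrite !measure0 add0e lee_fin mulr_ge0.
  apply/seteqP; split => u //= /andP[lou uhi].
  by have := lt_le_trans hilo (le_trans lou uhi); rewrite ltxx.
have mI : measurable I.
  by have := measurable_EFin_itv `[lo, hi]; under eq_set do rewrite in_itv.
have mS : measurable [set u : R | u%:E < lo].
  by have := measurable_EFin_itv `]-oo, lo[; under eq_set do rewrite in_itv.
have IS (nu : probability R R) :
    nu [set u | u%:E <= hi] = nu I + nu [set u | u%:E < lo].
  rewrite -(measureU nu mI mS); last first.
    by apply/seteqP; split => // u [/andP[+ _]]; rewrite leNgt => /negP.
  congr (nu _); apply/seteqP; split => u /=.
    by move=> uhi; have [ulo|/ltW ulo] := leP lo u%:E; [left; apply/andP|right].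
  by move=> [/andP[]//|/ltW/le_trans]; exact.
move: (kolmogorov_le_itvNyc_ereal nu12 hi) (kolmogorov_le_itvNyo_ereal nu21 lo).
rewrite !IS.
rewrite -(fineK (fin_num_measure nu1 _ mI)) -(fineK (fin_num_measure nu2 _ mI)).
rewrite -(fineK (fin_num_measure nu1 _ mS)) -(fineK (fin_num_measure nu2 _ mS)).
rewrite -!EFinD !lee_fin; lra.
Qed.

Lemma product_measure1_le {R : realType} d d' (T : measurableType d)
    (T' : measurableType d') (mu : probability T R)
    (nu1 nu2 : {sigma_finite_measure set T' -> \bar R}) (c : R)
    (A : set (T * T')) :
  (0 <= c)%R -> measurable A ->
  (forall x, nu1 (xsection A x) <= nu2 (xsection A x) + c%:E) ->
  (mu \x nu1) A <= (mu \x nu2) A + c%:E.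
Proof.
move=> c_ge0 mA nu12; rewrite /product_measure1 /=.
have mnu1 := measurable_fun_xsection nu1 mA.
have mnu2 := measurable_fun_xsection nu2 mA.
apply: (@le_trans _ _ (\int[mu]_x (nu2 (xsection A x) + c%:E))).
  by apply: ge0_le_integral => //; exact: emeasurable_funD.
rewrite ge0_integralD// integral_cst// (_ : c%:E * mu setT = c%:E)//.
by rewrite probability_setT mule1.
Qed.

Section tuple_boxes.
Context {d} {T : measurableType d} {l : nat}.

Definition box (A : 'I_l -> set T) : set (l.-tuple T) :=
  [set x | forall i, A i (tnth x i)].

Definition boxes : set (set (l.-tuple T)) :=
  [set box A | A in [set A | forall i, measurable (A i)]].

Lemma measurable_box A : (forall i, measurable (A i)) -> measurable (box A).
Proof.
move=> mA.
suff -> : box A = \bigcap_(i in [set: 'I_l]) ((tnth (T:=T))^~ i @^-1` A i).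
  apply: fin_bigcap_measurable => // i _.
  by rewrite -[X in measurable X]setTI; exact: measurable_tnth.
by apply/seteqP; split => x /= Ax i => [_|]; exact: Ax.
Qed.

Lemma boxes_setI : setI_closed boxes.
Proof.
move=> _ _ [A mA <-] [B mB <-]; exists (fun i => A i `&` B i).
  by move=> i; exact: measurableI.
by apply/seteqP; split => x /= => [ABx|[Ax Bx] i]; [split => i; case: (ABx i)|].
Qed.

Lemma measurable_sigma_boxes (E : set (l.-tuple T)) :
  measurable E -> <<s boxes >> E.
Proof.
rewrite /measurable /= /g_sigma_preimage; apply: sub_sigma_algebra2 => X.
rewrite -bigcup_seq => -[i _ [B mB <-]].
exists (fun j => if j == i then B else setT); first by move=> j; case: ifP.
apply/seteqP; split => x /=; first by move=> /(_ i); rewrite eqxx.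
by move=> [_ Bx] j; case: eqP => [->|].
Qed.

Lemma measure_tuple_unique {R : realType}
    (m1 m2 : {measure set (l.-tuple T) -> \bar R}) :
  m1 setT < +oo ->
  (forall A, (forall i, measurable (A i)) -> m1 (box A) = m2 (box A)) ->
  forall E, measurable E -> m1 E = m2 E.
Proof.
move=> m1_fin m12 E /measurable_sigma_boxes.
have boxesT : boxes (@setT (l.-tuple T)).
  by exists (fun=> setT) => //; apply/seteqP; split.
have boxes_measurable : boxes `<=` measurable.
  by move=> _ [A mA <-]; exact: measurable_box.
apply: (g_sigma_algebra_measure_unique _ boxes_measurable _ (fun=> boxesT)).
- by rewrite bigcup_const.
- exact: boxes_setI.
- by move=> _ [A mA <-]; exact: m12.
- by [].
Qed.

End tuple_boxes.

Lemma product_prob_unique {R : realType} {l} {D : 'I_l -> probability R R}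
    {P Q : probability (l.-tuple R) R} :
  is_product_prob D P -> is_product_prob D Q ->
  forall E, measurable E -> P E = Q E.
Proof.
move=> PD QD; apply: measure_tuple_unique.
  exact: fin_num_fun_lty (fin_num_measure P).
by move=> A mA; exact: etrans (PD _ mA) (esym (QD _ mA)).
Qed.

Section tuple_maps.
Context {d} {T : measurableType d} {l : nat}.

Definition tupdate (k : 'I_l) (xu : l.-tuple T * T) : l.-tuple T :=
  [tuple if i == k then xu.2 else tnth xu.1 i | i < l].

Definition tmix (k : nat) (xy : l.-tuple T * l.-tuple T) : l.-tuple T :=
  [tuple if (i < k)%N then tnth xy.1 i else tnth xy.2 i | i < l].

Lemma tnth_tupdate k xu i :
  tnth (tupdate k xu) i = if i == k then xu.2 else tnth xu.1 i.
Proof. exact: tnth_mktuple. Qed.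

Lemma tnth_tmix k xy i :
  tnth (tmix k xy) i = if (i < k)%N then tnth xy.1 i else tnth xy.2 i.
Proof. exact: tnth_mktuple. Qed.

Lemma measurable_tupdate k : measurable_fun setT (tupdate k).
Proof.
apply/measurable_fun_tnthP => i.
have -> : (tnth (T:=T))^~ i \o tupdate k =
    fun xu => if i == k then xu.2 else tnth xu.1 i.
  by apply/funext => xu; rewrite /= tnth_tupdate.
case: (i == k); first exact: measurable_snd.
exact: measurableT_comp (measurable_tnth i) measurable_fst.
Qed.

Lemma measurable_tmix k : measurable_fun setT (tmix k).
Proof.
apply/measurable_fun_tnthP => i.
have -> : (tnth (T:=T))^~ i \o tmix k =
    fun xy => if (i < k)%N then tnth xy.1 i else tnth xy.2 i.
  by apply/funext => xy; rewrite /= tnth_tmix.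
case: (i < k)%N.
- exact: measurableT_comp (measurable_tnth i) measurable_fst.
- exact: measurableT_comp (measurable_tnth i) measurable_snd.
Qed.

HB.instance Definition _ k :=
  isMeasurableFun.Build _ _ _ _ (tupdate k) (measurable_tupdate k).
HB.instance Definition _ k :=
  isMeasurableFun.Build _ _ _ _ (tmix k) (measurable_tmix k).

End tuple_maps.

Section product_prob_maps.
Context {R : realType} {l : nat}.
Implicit Types (D Dh : 'I_l -> probability R R).
Implicit Types (P Ph : probability (l.-tuple R) R).

Lemma product_prob_tupdate D P (k : 'I_l) (nu : probability R R) :
  is_product_prob D P ->
  is_product_prob (fun i => if i == k then nu else D i)
    (distribution (P \x nu) (tupdate k)).
Proof.
move=> PD A mA; rewrite /distribution /pushforward /= -/(box A).
have mA' i : measurable (if i == k then setT else A i) by case: ifP.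
have -> : tupdate k @^-1` box A =
    box (fun i => if i == k then setT else A i) `*` A k.
  apply/seteqP; split => -[x u] /= Ax.
    split; last by have := Ax k; rewrite tnth_tupdate eqxx.
    by move=> i; have := Ax i; rewrite tnth_tupdate; case: eqP.
  by move=> i; case: Ax => /(_ i); rewrite tnth_tupdate; case: eqP => [->|].
transitivity (P (box (fun i => if i == k then setT else A i)) * nu (A k)).
  by apply: product_measure1E => //; exact: measurable_box.
rewrite (PD _ mA') (bigD1 k)//= [RHS](bigD1 k)//= eqxx probability_setT.
rewrite mul1e muleC.
by congr (_ * _); apply: eq_bigr => i /negbTE ->.
Qed.

Lemma product_prob_tmix D Dh P Ph (k : nat) :
  is_product_prob D P -> is_product_prob Dh Ph ->
  is_product_prob (fun i => if (i < k)%N then D i else Dh i)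
    (distribution (P \x Ph) (tmix k)).
Proof.
move=> PD PhDh A mA; rewrite /distribution /pushforward /= -/(box A).
pose A1 (i : 'I_l) := if (i < k)%N then A i else setT.
pose A2 (i : 'I_l) := if (i < k)%N then setT else A i.
have mA1 i : measurable (A1 i) by rewrite /A1; case: ifP.
have mA2 i : measurable (A2 i) by rewrite /A2; case: ifP.
have -> : tmix k @^-1` box A = box A1 `*` box A2.
  rewrite /A1 /A2; apply/seteqP; split => -[x y] /= Axy.
    by split => i; have := Axy i; rewrite tnth_tmix; case: ifP.
  by move=> i; case: Axy => /(_ i) + /(_ i); rewrite tnth_tmix; case: ifP.
transitivity (P (box A1) * Ph (box A2)).
  by apply: product_measure1E; exact: measurable_box.
rewrite (PD _ mA1) (PhDh _ mA2) -big_split.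
apply: eq_bigr => i _; rewrite /A1 /A2 /=.
by case: ifP; rewrite probability_setT ?mule1 ?mul1e.
Qed.

End product_prob_maps.

Lemma single_intersecting_xsection {R : realType} {l} (E : set (l.-tuple R))
    (k : 'I_l) (x : l.-tuple R) :
  single_intersecting E ->
  exists lo hi, xsection (tupdate k @^-1` E) x = [set u | lo <= u%:E <= hi].
Proof.
move=> /(_ k x) [lo [hi Ex]]; exists lo, hi.
apply/seteqP; split => u;
  rewrite /xsection /= in_setE /= Ex ?tnth_tupdate ?eqxx// => j /negbTE jk;
  by rewrite tnth_tupdate jk.
Qed.

Lemma tupdate_kolmogorov_le {R : realType} {l} (Q : probability (l.-tuple R) R)
    (k : 'I_l) (nu1 nu2 : probability R R) (xi : R) (E : set (l.-tuple R)) :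
  kolmogorov_dist nu1 nu2 <= xi%:E -> measurable E -> single_intersecting E ->
  (Q \x nu1) (tupdate k @^-1` E) <=
    (Q \x nu2) (tupdate k @^-1` E) + (2 * xi)%:E.
Proof.
move=> nu12 mE EI; apply: product_measure1_le.
- by rewrite mulr_ge0// (kolmogorov_dist_ub_ge0 nu12).
- by rewrite -[X in measurable X]setTI; exact: measurable_tupdate.
- move=> x; have [lo [hi ->]] := single_intersecting_xsection _ k x EI.
  exact: kolmogorov_le_interval nu12.
Qed.

Lemma fine_dist_le {R : realDomainType} (a b : \bar R) (c : R) :
  a \is a fin_num -> b \is a fin_num ->
  a <= b + c%:E -> b <= a + c%:E -> (`|fine a - fine b| <= c)%R.
Proof.
move=> /fineK <- /fineK <-; rewrite -!EFinD !lee_fin /= => ab ba.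
by rewrite ler_norml; apply/andP; split; lra.
Qed.

Lemma telescope_dist_le {R : numDomainType} (f : nat -> R) (c : R) (n : nat) :
  (forall k, (k < n)%N -> `|f k.+1 - f k| <= c)%R ->
  (`|f n - f 0| <= c * n%:R)%R.
Proof.
elim: n => [|n IH] fc; first by rewrite subrr normr0 mulr0.
rewrite (le_trans (ler_distD (f n) _ _))// -natr1 mulrDr mulr1 addrC lerD//.
- by apply: IH => k kn; apply: fc; exact: ltnW.
- exact: fc.
Qed.

Section hybrid.
Context {R : realType} {l : nat} {D Dh : 'I_l -> probability R R}
  {P Ph : probability (l.-tuple R) R}.
Hypotheses (PD : is_product_prob D P) (PhDh : is_product_prob Dh Ph).

Definition hybrid (k : nat) : probability (l.-tuple R) R :=
  distribution (P \x Ph) (tmix k).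

Let hybrid_product k :
  is_product_prob (fun i => if (i < k)%N then D i else Dh i) (hybrid k).
Proof. exact: product_prob_tmix. Qed.

Lemma hybrid0 E : measurable E -> hybrid 0 E = Ph E.
Proof.
move=> mE; apply: product_prob_unique (hybrid_product 0) _ _ mE.
by rewrite (_ : (fun i => _) = Dh)//; apply/funext.
Qed.

Lemma hybrid_last E : measurable E -> hybrid l E = P E.
Proof.
move=> mE; apply: product_prob_unique (hybrid_product l) _ _ mE.
by rewrite (_ : (fun i => _) = D)//; apply/funext => i; rewrite ltn_ord.
Qed.

Lemma hybrid_step_le (xi : R) (k : 'I_l) E :
  kolmogorov_dist (D k) (Dh k) <= xi%:E ->
  measurable E -> single_intersecting E ->
  (`|fine (hybrid k.+1 E) - fine (hybrid k E)| <= 2 * xi)%R.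
Proof.
move=> Dk mE EI.
pose Q (nu : probability R R) : probability (l.-tuple R) R :=
  distribution (hybrid k \x nu) (tupdate k).
have HS : hybrid k.+1 E = Q (D k) E.
  apply: product_prob_unique (hybrid_product k.+1) _ _ mE.
  suff -> : (fun i : 'I_l => if (i < k.+1)%N then D i else Dh i) =
      (fun i => if i == k then D k else if (i < k)%N then D i else Dh i).
    exact: product_prob_tupdate.
  apply/funext => i; case: (eqVneq i k) => [->|/negbTE ik].
    by rewrite ltnSn ?eqxx.
  by rewrite ltnS leq_eqVlt val_eqE ik.
have H : hybrid k E = Q (Dh k) E.
  apply: product_prob_unique (hybrid_product k) _ _ mE.
  suff -> : (fun i : 'I_l => if (i < k)%N then D i else Dh i) =
      (fun i => if i == k then Dh k else if (i < k)%N then D i else Dh i).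
    exact: product_prob_tupdate.
  by apply/funext => i; case: eqP => [->|]; rewrite ?ltnn.
apply: fine_dist_le; rewrite ?fin_num_measure// HS H.
- exact: tupdate_kolmogorov_le.
- by apply: tupdate_kolmogorov_le => //; rewrite kolmogorov_distC.
Qed.

End hybrid.
Arguments hybrid {R l} P Ph k.

Theorem mainTheorem18 (R : realType) (l : nat) (xi : R)
    (D Dh : 'I_l -> probability R R)
    (P Ph : probability (l.-tuple R) R) :
  is_product_prob D P -> is_product_prob Dh Ph ->
  (forall i, kolmogorov_dist (D i) (Dh i) <= xi%:E) ->
  forall E : set (l.-tuple R), measurable E -> single_intersecting E ->
    `|P E - Ph E| <= (2 * xi * l%:R)%:E.
Proof.
move=> PD PhDh DDh E mE EI.
have := telescope_dist_le (fun k => fine (hybrid P Ph k E)) (2 * xi) l.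
rewrite (hybrid_last PD PhDh)// (hybrid0 PD PhDh)// -lee_fin -abse_EFin.
rewrite EFinB !fineK ?fin_num_measure//; apply=> k kl.
exact: hybrid_step_le PD PhDh xi (Ordinal kl) E (DDh _) mE EI.
Qed.
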